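(* Let $0<L<\infty$ and let $(T_f,T_s)$ be the unique solution on $[0,L]$ of the boundary value problem $$-\varphi\kappa_fT_f''+c_{p,f}\frac{\dot m_c}{A_c}T_f'=h_v(T_s-T_f),\qquad (1-\varphi)\kappa_sT_s''=h_v(T_s-T_f)\quad\text{on }(0,L),$$ $$T_f(0)=T_s(0)=T_b,\quad (1-\varphi)\kappa_sT_s'(L)=q_{HG}-c_{p,f}\frac{\dot m_c}{A_c}(T_s(L)-T_f(L)),\quad T_f'(L)=\frac{h_vA_c}{c_{p,f}\dot m_c}(T_s(L)-T_f(L)).$$ Then $T_s(y)\ge T_f(y)$ for all $y\in[0,L]$, and the two temperatures coincide if and only if $\gamma:=\frac{q_{HG}}{(1-\varphi)\kappa_s}=0$.
   Context: Parameters: $\varphi\in(0,1)$, $\kappa_f,\kappa_s,h_v,c_{p,f},\dot m_c,A_c>0$, $T_b\in\mathbb R$, $q_{HG}\ge 0$ (the heat flux from the hot gas; the paper's sign analysis treats the case $q_{HG}\ge0$). *)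

From Stdlib Require Import Reals.
From Coquelicot Require Import Coquelicot.
Open Scope R_scope.

Definition C2_on (L : R) (f : R -> R) : Prop :=
  forall y, 0 <= y <= L -> ex_derive f y /\ ex_derive (Derive f) y.

Definition is_solution (phi kf ks hv cpf mdot Ac Tb q L : R)
    (Tf Ts : R -> R) : Prop :=
  C2_on L Tf /\ C2_on L Ts /\
  (forall y, 0 < y < L ->
     - phi * kf * Derive (Derive Tf) y + cpf * (mdot / Ac) * Derive Tf y
       = hv * (Ts y - Tf y)) /\
  (forall y, 0 < y < L ->
     (1 - phi) * ks * Derive (Derive Ts) y = hv * (Ts y - Tf y)) /\
  Tf 0 = Tb /\ Ts 0 = Tb /\
  (1 - phi) * ks * Derive Ts L = q - cpf * (mdot / Ac) * (Ts L - Tf L) /\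
  Derive Tf L = (hv * Ac) / (cpf * mdot) * (Ts L - Tf L).

Definition gamma (phi ks q : R) : R := q / ((1 - phi) * ks).

(** Put [w := Ts - Tf] and [p := Tf'].  Dividing the equations by the
    conductivities turns the problem into the linear system
    [w'' = k w - al p], [p' = al p - be w] with [0 < be < k], together with
    [w(0) = 0], [p(L) = (be/al) w(L)] and the Robin condition
    [w'(L) = gamma - D w(L)], [D > 0].  This system obeys a minimum principle
    when [gamma >= 0]: if [w] had a negative minimum [m], integrating the
    [p]-equation backwards from [L] would give [al p >= be m], hence
    [w'' <= k w - be m], which is close to [(k - be) m < 0] near the minimum
    point; so the minimum lies neither in the interior, nor at [0] (where
    [w = 0]), nor at [L] (where [w'(L) > 0]).  If [gamma = 0] the system is
    invariant under [(w, p) |-> (-w, -p)], so [w = 0]; conversely [w = 0]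
    forces [w'(L) = 0], i.e. [gamma = 0]. *)

From Stdlib Require Import Reals Lra.
From Coquelicot Require Import Coquelicot.
Open Scope R_scope.

Lemma is_derive_continuous (f : R -> R) (x d : R) :
  is_derive f x d -> continuous f x.
Proof.
  intros Hd.
  apply (ex_derive_continuous (K := R_AbsRing) (V := R_NormedModule)).
  now exists d.
Qed.

Lemma continuous_lt_near (f : R -> R) (x c : R) :
  continuous f x -> f x < c ->
  exists e, 0 < e /\ forall y, Rabs (y - x) < e -> f y < c.
Proof.
  intros Hf Hlt.
  destruct (Hf (fun z => z < c)) as [e He]; [now apply open_lt|].
  exists e; split; [apply cond_pos|].
  intros y Hy; now apply He.
Qed.

Lemma is_derive_le0_of_min_at_right (f : R -> R) (a b d : R) :
  a < b -> is_derive f b d -> (forall x, a <= x <= b -> f b <= f x) -> d <= 0.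
Proof.
  intros Hab Hd Hmin.
  destruct (Rle_lt_dec d 0) as [|Hpos]; [assumption|exfalso].
  apply is_derive_Reals in Hd.
  destruct (Hd d Hpos) as [[del Hdel] Hquot].
  set (h := - Rmin (del / 2) (b - a)).
  assert (Hh : 0 < Rmin (del / 2) (b - a)) by (apply Rmin_glb_lt; lra).
  pose proof (Rmin_l (del / 2) (b - a)).
  pose proof (Rmin_r (del / 2) (b - a)).
  assert (Hhabs : Rabs h < del)
    by (unfold h; rewrite Rabs_Ropp, Rabs_pos_eq; lra).
  specialize (Hquot h ltac:(unfold h; lra) Hhabs).
  apply Rabs_def2 in Hquot.
  assert (Hle : f b <= f (b + h)) by (apply Hmin; unfold h; lra).
  assert (Hdiff : f (b + h) - f b = (f (b + h) - f b) / h * h)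
    by (field; unfold h; lra).
  assert (h < 0) by (unfold h; lra).
  nra.
Qed.

Lemma local_min_second_derivative_nonneg (f f1 f2 : R -> R) (a x0 b : R) :
  a < x0 < b ->
  (forall x, a <= x <= b -> f x0 <= f x) ->
  (forall x, a <= x <= b -> is_derive f x (f1 x)) ->
  (forall x, a < x < b -> is_derive f1 x (f2 x)) ->
  exists x, a < x < b /\ 0 <= f2 x.
Proof.
  intros Hx0 Hmin Df Df1.
  destruct (MVT_cor2 f f1 x0 b) as [x1 [Hx1 Hx1b]];
    [lra | intros; apply is_derive_Reals, Df; lra |].
  destruct (MVT_cor2 f f1 a x0) as [x2 [Hx2 Hx2b]];
    [lra | intros; apply is_derive_Reals, Df; lra |].
  destruct (MVT_cor2 f1 f2 x2 x1) as [x3 [Hx3 Hx3b]];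
    [lra | intros; apply is_derive_Reals, Df1; lra |].
  pose proof (Hmin a ltac:(lra)); pose proof (Hmin b ltac:(lra)).
  assert (0 <= f1 x1) by nra.
  assert (f1 x2 <= 0) by nra.
  exists x3; split; [lra | nra].
Qed.

Lemma nonneg_of_derive_le_mul (f f' : R -> R) (al y L : R) :
  y <= L ->
  (forall x, y <= x <= L -> is_derive f x (f' x)) ->
  (forall x, y < x < L -> f' x <= al * f x) ->
  0 <= f L -> 0 <= f y.
Proof.
  intros HyL Df Hf' HfL.
  destruct (Req_dec y L) as [->|HneL]; [assumption|].
  set (g := fun x => exp (- al * x) * f x).
  set (g' := fun x => exp (- al * x) * (f' x - al * f x)).
  destruct (MVT_cor2 g g' y L) as [c [Hc Hcint]]; [lra | |].
  { intros x Hx; apply is_derive_Reals; unfold g, g'.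
    replace (exp (- al * x) * (f' x - al * f x))
      with ((- al * exp (- al * x)) * f x + exp (- al * x) * f' x) by ring.
    apply (is_derive_mult (fun x => exp (- al * x)) f);
      [auto_derive; auto; ring | apply Df; lra | intros; apply Rmult_comm]. }
  assert (g' c <= 0).
  { unfold g'. pose proof (exp_pos (- al * c)). pose proof (Hf' c Hcint). nra. }
  unfold g in Hc.
  pose proof (exp_pos (- al * y)); pose proof (exp_pos (- al * L)).
  nra.
Qed.

Set Implicit Arguments.
Record reduced_bvp (L al be k D Q : R) (w w1 w2 p p1 : R -> R) : Prop := {
  rb_L_gt0 : 0 < L;
  rb_al_gt0 : 0 < al;
  rb_be_gt0 : 0 < be;
  rb_be_lt_k : be < k;
  rb_D_gt0 : 0 < D;
  rb_dw : forall y, 0 <= y <= L -> is_derive w y (w1 y);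
  rb_dw1 : forall y, 0 < y < L -> is_derive w1 y (w2 y);
  rb_dp : forall y, 0 <= y <= L -> is_derive p y (p1 y);
  rb_w2 : forall y, 0 < y < L -> w2 y = k * w y - al * p y;
  rb_p1 : forall y, 0 < y < L -> p1 y = al * p y - be * w y;
  rb_w0 : w 0 = 0;
  rb_pL : p L = be / al * w L;
  rb_w1L : w1 L = Q - D * w L
}.
Unset Implicit Arguments.

Section ReducedBVP.

Context {L al be k D Q : R} {w w1 w2 p p1 : R -> R}.
Hypothesis S : reduced_bvp L al be k D Q w w1 w2 p p1.

Lemma reduced_bvp_p_lower_bound (m : R) :
  (forall y, 0 <= y <= L -> m <= w y) ->
  forall y, 0 <= y <= L -> be * m <= al * p y.
Proof.
  intros Hm y Hy.
  pose proof (rb_al_gt0 S); pose proof (rb_be_gt0 S).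
  enough (0 <= p y - be / al * m).
  { replace (be * m) with (al * (be / al * m)) by (field; lra). nra. }
  apply (nonneg_of_derive_le_mul (fun x => p x - be / al * m) p1 al y L);
    [lra | | |].
  - intros x Hx. replace (p1 x) with (p1 x - 0) by ring.
    apply (is_derive_minus p (fun _ => be / al * m));
      [apply (rb_dp S); lra
      | apply (is_derive_const (K := R_AbsRing) (V := R_NormedModule))].
  - intros x Hx. rewrite (rb_p1 S) by lra.
    pose proof (Hm x ltac:(lra)).
    replace (al * (p x - be / al * m)) with (al * p x - be * m) by (field; lra).
    nra.
  - rewrite (rb_pL S).
    pose proof (Hm L ltac:(lra)).
    assert (0 < be / al) by (apply Rdiv_lt_0_compat; lra).
    nra.
Qed.

Lemma reduced_bvp_no_interior_neg_min (y0 : R) :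
  0 < y0 < L -> w y0 < 0 -> (forall y, 0 <= y <= L -> w y0 <= w y) -> False.
Proof.
  intros Hy0 Hneg Hmin.
  set (m := w y0) in *.
  pose proof (rb_al_gt0 S); pose proof (rb_be_gt0 S); pose proof (rb_be_lt_k S).
  assert (Hm_lt : m < be * m / k).
  { apply (Rmult_lt_reg_r k); [lra|].
    replace (be * m / k * k) with (be * m) by (field; lra). nra. }
  destruct (continuous_lt_near w y0 (be * m / k)) as [e [He Hnear]];
    [apply (is_derive_continuous w y0 (w1 y0)), (rb_dw S); lra | exact Hm_lt |].
  assert (Hconcave : forall x, Rabs (x - y0) < e -> 0 < x < L -> w2 x < 0).
  { intros x Hx HxL.
    rewrite (rb_w2 S) by exact HxL.
    pose proof (Hnear x Hx).
    pose proof (reduced_bvp_p_lower_bound m Hmin x ltac:(lra)).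
    assert (k * w x < be * m).
    { replace (be * m) with (k * (be * m / k)) by (field; lra).
      apply Rmult_lt_compat_l; lra. }
    nra. }
  set (r := Rmin e (Rmin y0 (L - y0)) / 2).
  assert (0 < Rmin e (Rmin y0 (L - y0)))
    by (apply Rmin_glb_lt; [lra | apply Rmin_glb_lt; lra]).
  pose proof (Rmin_l e (Rmin y0 (L - y0))).
  pose proof (Rmin_r e (Rmin y0 (L - y0))).
  pose proof (Rmin_l y0 (L - y0)); pose proof (Rmin_r y0 (L - y0)).
  assert (0 < r < e /\ r < y0 /\ r < L - y0) by (unfold r; lra).
  destruct (local_min_second_derivative_nonneg w w1 w2 (y0 - r) y0 (y0 + r))
    as [x [Hx Hw2]]; [lra | intros; apply Hmin; lra
                     | intros; apply (rb_dw S); lra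
                     | intros; apply (rb_dw1 S); lra |].
  assert (w2 x < 0) by (apply Hconcave; [apply Rabs_def1 | ]; lra).
  lra.
Qed.

Lemma reduced_bvp_nonneg : 0 <= Q -> forall y, 0 <= y <= L -> 0 <= w y.
Proof.
  intros HQ.
  pose proof (rb_L_gt0 S); pose proof (rb_D_gt0 S).
  destruct (continuity_ab_min w 0 L) as [y0 [Hmin Hy0]].
  { lra. }
  { intros y Hy; apply continuity_pt_filterlim.
    now apply (is_derive_continuous w y (w1 y)), (rb_dw S). }
  destruct (Rle_lt_dec 0 (w y0)) as [Hpos|Hneg].
  { intros y Hy; specialize (Hmin y Hy); lra. }
  exfalso.
  destruct (Req_dec y0 0) as [->|].
  { rewrite (rb_w0 S) in Hneg; lra. }
  destruct (Req_dec y0 L) as [->|].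
  - assert (w1 L <= 0)
      by (apply (is_derive_le0_of_min_at_right w 0 L); auto;
        apply (rb_dw S); lra).
    rewrite (rb_w1L S) in *. nra.
  - apply (reduced_bvp_no_interior_neg_min y0); auto; lra.
Qed.

Lemma reduced_bvp_Q_eq0 :
  (forall y, 0 <= y <= L -> w y = 0) -> Q = 0.
Proof.
  intros Hw0.
  pose proof (rb_L_gt0 S).
  assert (w1 L <= 0).
  { apply (is_derive_le0_of_min_at_right w 0 L); auto; [apply (rb_dw S); lra|].
    intros x Hx; rewrite !Hw0 by lra; lra. }
  assert (- w1 L <= 0).
  { apply (is_derive_le0_of_min_at_right (fun y => - w y) 0 L); auto.
    - apply (is_derive_opp w); apply (rb_dw S); lra.
    - intros x Hx; rewrite !Hw0 by lra; lra. }
  pose proof (rb_w1L S) as Hflux.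
  rewrite (Hw0 L) in Hflux by lra.
  lra.
Qed.

End ReducedBVP.

Lemma reduced_bvp_opp {L al be k D : R} {w w1 w2 p p1 : R -> R} :
  reduced_bvp L al be k D 0 w w1 w2 p p1 ->
  reduced_bvp L al be k D 0 (fun y => - w y) (fun y => - w1 y) (fun y => - w2 y)
    (fun y => - p y) (fun y => - p1 y).
Proof.
  intros [HL Hal Hbe Hk HD Dw Dw1 Dp Ew2 Ep1 W0 PL W1L].
  split; auto.
  - intros y Hy; apply (is_derive_opp w); auto.
  - intros y Hy; apply (is_derive_opp w1); auto.
  - intros y Hy; apply (is_derive_opp p); auto.
  - intros y Hy; rewrite Ew2 by exact Hy; ring.
  - intros y Hy; rewrite Ep1 by exact Hy; ring.
  - rewrite W0; ring.
  - rewrite PL; ring.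
  - rewrite W1L; ring.
Qed.

Section Reduction.

Context {phi kf ks hv cpf mdot Ac Tb q L : R} {Tf Ts : R -> R}.
Hypotheses (Hphi : 0 < phi < 1) (Hkf : 0 < kf) (Hks : 0 < ks) (Hhv : 0 < hv)
  (Hcpf : 0 < cpf) (Hmdot : 0 < mdot) (HAc : 0 < Ac) (HL : 0 < L).
Hypothesis Hsol : is_solution phi kf ks hv cpf mdot Ac Tb q L Tf Ts.

Let a := phi * kf.
Let b := (1 - phi) * ks.
Let c := cpf * (mdot / Ac).

Lemma solution_reduced_bvp :
  reduced_bvp L (c / a) (hv / a) (hv / b + hv / a) (c / b + hv / c)
    (gamma phi ks q) (fun y => Ts y - Tf y)
    (fun y => Derive Ts y - Derive Tf y)
    (fun y => Derive (Derive Ts) y - Derive (Derive Tf) y)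
    (Derive Tf) (Derive (Derive Tf)).
Proof.
  destruct Hsol as [CF [CS [EF [ES [F0 [S0 [BS BF]]]]]]].
  fold a b c in EF, ES, BS.
  assert (0 < a) by (unfold a; nra).
  assert (0 < b) by (unfold b; nra).
  assert (0 < c)
    by (apply Rmult_lt_0_compat; [lra | apply Rdiv_lt_0_compat; lra]).
  assert (Ef : forall y, 0 < y < L ->
            Derive (Derive Tf) y = (c * Derive Tf y - hv * (Ts y - Tf y)) / a).
  { intros y Hy; specialize (EF y Hy).
    apply (Rmult_eq_reg_l a); [|lra].
    replace (a * ((c * Derive Tf y - hv * (Ts y - Tf y)) / a))
      with (c * Derive Tf y - hv * (Ts y - Tf y)) by (field; lra).
    unfold a; lra. }
  assert (Es : forall y, 0 < y < L ->
            Derive (Derive Ts) y = hv * (Ts y - Tf y) / b)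
    by (intros y Hy; rewrite <- (ES y Hy); field; lra).
  split.
  - exact HL.
  - now apply Rdiv_lt_0_compat.
  - now apply Rdiv_lt_0_compat.
  - assert (0 < hv / b) by now apply Rdiv_lt_0_compat. lra.
  - assert (0 < c / b) by now apply Rdiv_lt_0_compat.
    assert (0 < hv / c) by now apply Rdiv_lt_0_compat. lra.
  - intros y Hy; apply (is_derive_minus Ts Tf);
      [apply Derive_correct, CS | apply Derive_correct, CF]; lra.
  - intros y Hy; apply (is_derive_minus (Derive Ts) (Derive Tf));
      [apply Derive_correct, CS | apply Derive_correct, CF]; lra.
  - intros y Hy; apply Derive_correct, CF; lra.
  - intros y Hy; rewrite Ef, Es by exact Hy; field; lra.
  - intros y Hy; rewrite Ef by exact Hy; field; lra.
  - rewrite F0, S0; ring.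
  - rewrite BF; unfold c; field; repeat split; lra.
  - assert (HTsL : Derive Ts L = (q - c * (Ts L - Tf L)) / b)
      by (rewrite <- BS; field; lra).
    unfold gamma; fold b; rewrite HTsL, BF; unfold c.
    field; repeat split; lra.
Qed.

End Reduction.

Theorem lemma3 (phi kf ks hv cpf mdot Ac Tb q L : R) (Tf Ts : R -> R) :
  0 < phi < 1 -> 0 < kf -> 0 < ks -> 0 < hv -> 0 < cpf -> 0 < mdot -> 0 < Ac ->
  0 <= q -> 0 < L ->
  is_solution phi kf ks hv cpf mdot Ac Tb q L Tf Ts ->
  (forall y, 0 <= y <= L -> Tf y <= Ts y) /\
  ((forall y, 0 <= y <= L -> Ts y = Tf y) <-> gamma phi ks q = 0).
Proof.
  intros Hphi Hkf Hks Hhv Hcpf Hmdot HAc Hq HL Hsol.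
  pose proof (solution_reduced_bvp Hphi Hkf Hks Hhv Hcpf Hmdot HAc HL Hsol)
    as S.
  assert (Hgamma : 0 <= gamma phi ks q).
  { unfold gamma; apply Rdiv_le_0_compat; [lra | nra]. }
  pose proof (reduced_bvp_nonneg S Hgamma) as Hgap.
  split; [intros y Hy; specialize (Hgap y Hy); lra|].
  split.
  - intros Heq; apply (reduced_bvp_Q_eq0 S).
    intros y Hy; rewrite (Heq y Hy); ring.
  - intros Hzero; rewrite Hzero in S.
    pose proof (reduced_bvp_nonneg (reduced_bvp_opp S) (Rle_refl 0)) as Hgap'.
    intros y Hy; specialize (Hgap y Hy); specialize (Hgap' y Hy).
    simpl in Hgap'; lra.
Qed.
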